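(* Let $a,b,c,k,m>0$ and consider the system $$\frac{dx}{dt}=bx(1-x-cy),\qquad \frac{dy}{dt}=y\Big(\frac{1}{1+kx}-y-ax-mxy\Big).$$ Define $k^*=\frac1a-1$, $m_1=1-ac-k$, $m_2=\frac{2ack+ac-k-1}{1+k}$, the cubic $u(x)=A_1x^3+A_2x^2+A_3x+A_4$ with $A_1=km$, $A_2=(-ac-m+1)k+m$, $A_3=-ac-k-m+1$, $A_4=c-1$, and (when the discriminant $\Delta=4A_2^2-12A_1A_3$ of $u'$ is positive) let $x_{v2}$ denote the larger real root of $u'(x)=3A_1x^2+2A_2x+A_3$. A positive equilibrium is an equilibrium $(x,y)$ with $x>0,y>0$. Then: (1) If $m=m_1$, $0<c<1$ and $0<k<k^*$, the system has a unique positive equilibrium. (2) Suppose $m>m_1$. (a) Suppose $c>1$ (and $\Delta>0$). (i) If $u(x_{v2})=0$ and $m>m_2$, the system has a unique positive equilibrium. (ii) If $u(x_{v2})<0$: if $m>m_2$ and $k\ge k^*$, the system has a unique positive equilibrium; if $m>m_2$ and $0<k<k^*$, the system has two positive equilibria; if $m=m_2$, the system has a unique positive equilibrium; if $0<m<m_2$ and $k>k^*$, the system has a unique positive equilibrium. (b) If $0<c\le 1$ and $0<k<k^*$, the system has a unique positive equilibrium. (3) If $0<m<m_1$, $0<c<1$ and $0<k<k^*$, the system has a unique positive equilibrium.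
   Context: All parameters are positive. Positive equilibria have the form $(x,(1-x)/c)$ where $x\in(0,1)$ is a root of $u$. *)

From Stdlib Require Import Reals Lra.
Open Scope R_scope.

Definition fX (b c x y : R) : R := b * x * (1 - x - c * y).
Definition fY (a k m x y : R) : R := y * (1 / (1 + k * x) - y - a * x - m * x * y).

Definition pos_equilibrium (a b c k m x y : R) : Prop :=
  0 < x /\ 0 < y /\ fX b c x y = 0 /\ fY a k m x y = 0.

Definition unique_pos_eq (a b c k m : R) : Prop :=
  exists x0 y0, pos_equilibrium a b c k m x0 y0 /\
    forall x y, pos_equilibrium a b c k m x y -> x = x0 /\ y = y0.

Definition two_pos_eq (a b c k m : R) : Prop :=
  exists x1 y1 x2 y2, (x1, y1) <> (x2, y2) /\
    pos_equilibrium a b c k m x1 y1 /\ pos_equilibrium a b c k m x2 y2 /\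
    forall x y, pos_equilibrium a b c k m x y ->
      (x = x1 /\ y = y1) \/ (x = x2 /\ y = y2).

Definition kstar (a : R) : R := 1 / a - 1.
Definition mm1 (a c k : R) : R := 1 - a * c - k.
Definition mm2 (a c k : R) : R := (2 * a * c * k + a * c - k - 1) / (1 + k).

Definition AA1 (k m : R) : R := k * m.
Definition AA2 (a c k m : R) : R := (- a * c - m + 1) * k + m.
Definition AA3 (a c k m : R) : R := - a * c - k - m + 1.
Definition AA4 (c : R) : R := c - 1.

Definition ucub (a c k m x : R) : R :=
  AA1 k m * x ^ 3 + AA2 a c k m * x ^ 2 + AA3 a c k m * x + AA4 c.

Definition Delta_u (a c k m : R) : R :=
  4 * (AA2 a c k m) ^ 2 - 12 * AA1 k m * AA3 a c k m.

(* larger real root of u' (AA1 = k m > 0 under the standing assumptions) *)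
Definition x_v2 (a c k m : R) : R :=
  (- 2 * AA2 a c k m + sqrt (Delta_u a c k m)) / (6 * AA1 k m).

From Stdlib Require Import Reals Lra.
Open Scope R_scope.

(* On the x-nullcline y = (1 - x)/c the y-equation vanishes exactly where the
   cubic u does, so positive equilibria are the roots of u in (0,1).  We have
   u(0) = c - 1 and u(1) = a c (k* - k).  For m <= m1 all coefficients of u'
   are nonnegative and u is increasing on [0,oo).  For m > m1 the constant
   term of u' is negative, so u' has a single positive root x_v2: u decreases
   on [0,x_v2] and increases afterwards, and u'(1) = (1 + k)(m - m2) places
   x_v2 relative to 1.  Each case is then settled by the intermediate value
   theorem on the monotone pieces.  Monotonicity needs no calculus, since
   Simpson's rule is exact for cubics. *)

Lemma IVT_strict (f : R -> R) (p q : R) :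
  continuity f -> p < q -> f p * f q < 0 -> exists z, p < z < q /\ f z = 0.
Proof.
  intros hf hpq hsign.
  destruct (IVT_cor f p q hf (Rlt_le _ _ hpq) (Rlt_le _ _ hsign)) as [z [[hpz hzq] hz]].
  exists z; split; [split|exact hz].
  - destruct hpz as [| <-]; [assumption|]. rewrite hz in hsign; lra.
  - destruct hzq as [| ->]; [assumption|]. rewrite hz in hsign; lra.
Qed.

Lemma inj_on_of_lt_neq (P : R -> Prop) (f : R -> R) :
  (forall x y, P x -> P y -> x < y -> f x <> f y) ->
  forall x y, P x -> P y -> f x = f y -> x = y.
Proof.
  intros hf x y hx hy hxy.
  destruct (Rtotal_order x y) as [h|[h|h]]; [| exact h |].
  - exfalso; exact (hf x y hx hy h hxy).
  - exfalso; exact (hf y x hy hx h (eq_sym hxy)).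
Qed.

Section Cubic.
Variables A1 A2 A3 A4 : R.

Definition cubic (x : R) : R := A1 * x ^ 3 + A2 * x ^ 2 + A3 * x + A4.
Definition cubic_deriv (x : R) : R := 3 * A1 * x ^ 2 + 2 * A2 * x + A3.

Lemma continuity_cubic : continuity cubic.
Proof. unfold cubic; reg. Qed.

Lemma cubic_simpson x y :
  cubic y - cubic x =
  (y - x) * (cubic_deriv x + 4 * cubic_deriv ((x + y) / 2) + cubic_deriv y) / 6.
Proof. unfold cubic, cubic_deriv; field. Qed.

Lemma cubic_lt_of_deriv_pos x y :
  x < y -> 0 <= cubic_deriv x -> (forall z, x < z <= y -> 0 < cubic_deriv z) ->
  cubic x < cubic y.
Proof.
  intros hxy hx hpos.
  pose proof (hpos ((x + y) / 2) ltac:(lra)). pose proof (hpos y ltac:(lra)).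
  assert (0 < (y - x) * (cubic_deriv x + 4 * cubic_deriv ((x + y) / 2) + cubic_deriv y))
    by (apply Rmult_lt_0_compat; lra).
  pose proof (cubic_simpson x y); lra.
Qed.

Lemma cubic_lt_of_deriv_neg x y :
  x < y -> (forall z, x <= z < y -> cubic_deriv z < 0) -> cubic_deriv y <= 0 ->
  cubic y < cubic x.
Proof.
  intros hxy hneg hy.
  pose proof (hneg x ltac:(lra)). pose proof (hneg ((x + y) / 2) ltac:(lra)).
  assert (0 < (y - x) * - (cubic_deriv x + 4 * cubic_deriv ((x + y) / 2) + cubic_deriv y))
    by (apply Rmult_lt_0_compat; lra).
  pose proof (cubic_simpson x y); lra.
Qed.

Lemma cubic_increasing_of_nonneg_coeffs x y :
  0 < A1 -> 0 <= A2 -> 0 <= A3 -> 0 <= x < y -> cubic x < cubic y.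
Proof.
  intros h1 h2 h3 hxy.
  apply cubic_lt_of_deriv_pos; [lra| |intros z hz]; unfold cubic_deriv.
  - pose proof (Rmult_le_pos _ _ h2 (proj1 hxy)). nra.
  - assert (0 < A1 * z ^ 2) by (apply Rmult_lt_0_compat; [lra | apply pow_lt; lra]).
    pose proof (Rmult_le_pos A2 z h2 ltac:(lra)). lra.
Qed.

Section Critical_point.
Hypotheses (hA1 : 0 < A1) (hA3 : A3 < 0).

Definition cubic_crit : R :=
  (- 2 * A2 + sqrt (4 * A2 ^ 2 - 12 * A1 * A3)) / (6 * A1).

Lemma abs_lt_sqrt_discr : Rabs (2 * A2) < sqrt (4 * A2 ^ 2 - 12 * A1 * A3).
Proof.
  rewrite <- sqrt_Rsqr_abs. apply sqrt_lt_1_alt. unfold Rsqr. split; nra.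
Qed.

Lemma cubic_crit_pos : 0 < cubic_crit.
Proof.
  destruct (Rabs_def2 _ _ abs_lt_sqrt_discr).
  apply Rdiv_lt_0_compat; lra.
Qed.

(* The factor is 3 A1 (z - r'), where r' < 0 is the other root of the derivative. *)
Lemma cubic_deriv_scale z :
  0 <= z -> exists s, 0 < s /\ cubic_deriv z = s * (z - cubic_crit).
Proof.
  intros hz.
  destruct (Rabs_def2 _ _ abs_lt_sqrt_discr).
  set (D := 4 * A2 ^ 2 - 12 * A1 * A3) in *.
  set (sq := sqrt D) in *.
  assert (hsq : sq * sq = D) by (apply sqrt_sqrt; unfold D; nra).
  set (r' := (- 2 * A2 - sq) / (6 * A1)).
  assert (hr' : r' < 0) by (apply Rdiv_neg_pos; lra).
  exists (3 * A1 * (z - r')); split; [nra|].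
  assert (E : 3 * A1 * (z - r') * (z - cubic_crit) =
              3 * A1 * z ^ 2 + 2 * A2 * z + (4 * A2 ^ 2 - sq * sq) / (12 * A1))
    by (unfold r', cubic_crit; fold D sq; field; lra).
  rewrite E, hsq.
  unfold cubic_deriv, D; field; lra.
Qed.

Lemma cubic_decreasing_below_crit x y :
  0 <= x < y -> y <= cubic_crit -> cubic y < cubic x.
Proof.
  intros hxy hy.
  apply cubic_lt_of_deriv_neg; [lra| intros z hz |];
    [destruct (cubic_deriv_scale z) as [s [hs ->]] | destruct (cubic_deriv_scale y) as [s [hs ->]]];
    nra.
Qed.

Lemma cubic_increasing_above_crit x y : cubic_crit <= x < y -> cubic x < cubic y.
Proof.
  intros hxy. pose proof cubic_crit_pos.
  apply cubic_lt_of_deriv_pos; [lra| |intros z hz];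
    [destruct (cubic_deriv_scale x) as [s [hs ->]] | destruct (cubic_deriv_scale z) as [s [hs ->]]];
    nra.
Qed.

Lemma cubic_inj_below_crit x y :
  0 <= x <= cubic_crit -> 0 <= y <= cubic_crit -> cubic x = cubic y -> x = y.
Proof.
  apply (inj_on_of_lt_neq (fun z => 0 <= z <= cubic_crit)).
  intros p q hp hq hpq. pose proof (cubic_decreasing_below_crit p q); lra.
Qed.

Lemma cubic_inj_above_crit x y :
  cubic_crit <= x -> cubic_crit <= y -> cubic x = cubic y -> x = y.
Proof.
  apply (inj_on_of_lt_neq (fun z => cubic_crit <= z)).
  intros p q hp hq hpq. pose proof (cubic_increasing_above_crit p q); lra.
Qed.

End Critical_point.
End Cubic.

Definition unit_root (a c k m x : R) : Prop := 0 < x < 1 /\ ucub a c k m x = 0.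

Definition unique_unit_root (a c k m : R) : Prop :=
  exists x0, unit_root a c k m x0 /\ forall x, unit_root a c k m x -> x = x0.

Definition two_unit_roots (a c k m : R) : Prop :=
  exists x1 x2, x1 < x2 /\ unit_root a c k m x1 /\ unit_root a c k m x2 /\
    forall x, unit_root a c k m x -> x = x1 \/ x = x2.

Section Model.
Variables a b c k m : R.
Hypotheses (ha : 0 < a) (hb : 0 < b) (hc : 0 < c) (hk : 0 < k) (hm : 0 < m).

Local Notation u := (ucub a c k m).
Local Notation r := (x_v2 a c k m).

Lemma fY_on_x_nullcline x :
  0 < 1 + k * x ->
  fY a k m x ((1 - x) / c) = (1 - x) / (c ^ 2 * (1 + k * x)) * u x.
Proof. intros; unfold fY, ucub, AA1, AA2, AA3, AA4; field; lra. Qed.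

Lemma pos_equilibrium_iff x y :
  pos_equilibrium a b c k m x y <-> unit_root a c k m x /\ y = (1 - x) / c.
Proof.
  unfold pos_equilibrium, unit_root, fX. split.
  - intros [hx [hy [hfX hfY]]].
    assert (hyx : y = (1 - x) / c).
    { destruct (Rmult_integral _ _ hfX) as [h|h].
      - pose proof (Rmult_lt_0_compat b x hb hx); lra.
      - replace (1 - x) with (c * y) by lra; field; lra. }
    assert (hx1 : x < 1) by (rewrite hyx in hy; apply Rdiv_pos_cases in hy; lra).
    rewrite hyx, fY_on_x_nullcline in hfY by nra.
    destruct (Rmult_integral _ _ hfY) as [h|h]; [|tauto].
    exfalso; assert (0 < (1 - x) / (c ^ 2 * (1 + k * x))) by
      (apply Rdiv_lt_0_compat; [lra | apply Rmult_lt_0_compat; nra]); lra.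
  - intros [[hx hu] ->]. repeat split; try lra.
    + apply Rdiv_lt_0_compat; lra.
    + replace (1 - x - c * ((1 - x) / c)) with 0 by (field; lra); ring.
    + rewrite fY_on_x_nullcline, hu by nra; ring.
Qed.

Lemma unique_pos_eq_of_unique_unit_root :
  unique_unit_root a c k m -> unique_pos_eq a b c k m.
Proof.
  intros [x0 [hx0 huniq]].
  exists x0, ((1 - x0) / c); split; [apply pos_equilibrium_iff; tauto|].
  intros x y [hx ->]%pos_equilibrium_iff. rewrite (huniq x hx). tauto.
Qed.

Lemma two_pos_eq_of_two_unit_roots :
  two_unit_roots a c k m -> two_pos_eq a b c k m.
Proof.
  intros [x1 [x2 [hlt [hx1 [hx2 hroots]]]]].
  exists x1, ((1 - x1) / c), x2, ((1 - x2) / c).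
  split; [intros E; injection E; lra|].
  split; [apply pos_equilibrium_iff; tauto|].
  split; [apply pos_equilibrium_iff; tauto|].
  intros x y [hx ->]%pos_equilibrium_iff.
    destruct (hroots x hx) as [->| ->]; tauto.
Qed.

Lemma ucub_0 : u 0 = c - 1.
Proof. unfold ucub, AA4; ring. Qed.

Let hac : 0 < a * c.
Proof. apply Rmult_lt_0_compat; assumption. Qed.

Lemma ucub_1 : u 1 = a * c * (kstar a - k).
Proof. unfold ucub, kstar, AA1, AA2, AA3, AA4; field; lra. Qed.

Lemma ucub_sign_change p q :
  p < q -> u p * u q < 0 -> exists z, p < z < q /\ u z = 0.
Proof. apply IVT_strict, continuity_cubic. Qed.

Lemma unique_unit_root_of_le_mm1 :
  m <= mm1 a c k -> c < 1 -> k < kstar a -> unique_unit_root a c k m.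
Proof.
  unfold mm1; intros hm1 hc1 hks.
  assert (hinc : forall x y, 0 <= x < y -> u x < u y).
  { intros x y; apply cubic_increasing_of_nonneg_coeffs;
      unfold AA1, AA2, AA3; nra. }
  assert (hu1 : 0 < u 1) by (rewrite ucub_1; apply Rmult_lt_0_compat; nra).
  destruct (ucub_sign_change 0 1) as [x0 [hx0 hux0]]; [lra | rewrite ucub_0; nra |].
  exists x0; split; [split; [lra | exact hux0]|].
  intros x [hx hux].
  apply (inj_on_of_lt_neq (fun z => 0 <= z) u); try lra.
  intros p q hp _ hpq; pose proof (hinc p q); lra.
Qed.

Section Above_mm1.
Hypothesis hm1 : m > mm1 a c k.

Let hA1 : 0 < AA1 k m.
Proof. unfold AA1; nra. Qed.

Let hA3 : AA3 a c k m < 0.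
Proof. unfold AA3, mm1 in *; lra. Qed.

Lemma x_v2_pos : 0 < r.
Proof. exact (cubic_crit_pos _ (AA2 a c k m) _ hA1 hA3). Qed.

Lemma ucub_decreasing x y : 0 <= x < y -> y <= r -> u y < u x.
Proof. exact (cubic_decreasing_below_crit _ (AA2 a c k m) _ (AA4 c) hA1 hA3 x y). Qed.

Lemma ucub_increasing x y : r <= x < y -> u x < u y.
Proof. exact (cubic_increasing_above_crit _ (AA2 a c k m) _ (AA4 c) hA1 hA3 x y). Qed.

Lemma ucub_inj_below x y : 0 <= x <= r -> 0 <= y <= r -> u x = u y -> x = y.
Proof. exact (cubic_inj_below_crit _ (AA2 a c k m) _ (AA4 c) hA1 hA3 x y). Qed.

Lemma ucub_inj_above x y : r <= x -> r <= y -> u x = u y -> x = y.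
Proof. exact (cubic_inj_above_crit _ (AA2 a c k m) _ (AA4 c) hA1 hA3 x y). Qed.

Lemma one_sub_x_v2_sign :
  exists s, 0 < s /\ (1 + k) * (m - mm2 a c k) = s * (1 - r).
Proof.
  destruct (cubic_deriv_scale _ (AA2 a c k m) _ hA1 hA3 1) as [s [hs E]]; [lra|].
  exists s; split; [exact hs|].
  transitivity (cubic_deriv (AA1 k m) (AA2 a c k m) (AA3 a c k m) 1); [|exact E].
  unfold cubic_deriv, mm2, AA1, AA2, AA3; field; lra.
Qed.

Lemma x_v2_lt_1 : m > mm2 a c k -> r < 1.
Proof. destruct one_sub_x_v2_sign as [s [hs E]]; nra. Qed.

Lemma x_v2_eq_1 : m = mm2 a c k -> r = 1.
Proof.
  intros hm2; destruct one_sub_x_v2_sign as [s [hs E]].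
  rewrite (Rminus_diag_eq _ _ hm2), Rmult_0_r in E.
  destruct (Rmult_integral _ _ (eq_sym E)); lra.
Qed.

Lemma x_v2_gt_1 : m < mm2 a c k -> 1 < r.
Proof. destruct one_sub_x_v2_sign as [s [hs E]]; nra. Qed.

Lemma unique_unit_root_of_crit_root :
  u r = 0 -> m > mm2 a c k -> unique_unit_root a c k m.
Proof.
  intros hur hm2. pose proof x_v2_pos. pose proof (x_v2_lt_1 hm2).
  exists r; split; [split; [lra | exact hur]|].
  intros x [hx hux]. destruct (Rle_or_lt x r).
  - apply ucub_inj_below; lra.
  - apply ucub_inj_above; lra.
Qed.

Lemma unique_unit_root_of_crit_neg_ge_kstar :
  c > 1 -> u r < 0 -> m > mm2 a c k -> k >= kstar a -> unique_unit_root a c k m.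
Proof.
  intros hc1 hur hm2 hks. pose proof x_v2_pos. pose proof (x_v2_lt_1 hm2).
  destruct (ucub_sign_change 0 r) as [x0 [hx0 hux0]]; [lra | rewrite ucub_0; nra |].
  exists x0; split; [split; [lra | exact hux0]|].
  intros x [hx hux]. destruct (Rle_or_lt x r).
  - apply ucub_inj_below; lra.
  - exfalso. pose proof (ucub_increasing x 1).
    assert (u 1 <= 0) by (rewrite ucub_1; nra). lra.
Qed.

Lemma two_unit_roots_of_crit_neg :
  c > 1 -> u r < 0 -> m > mm2 a c k -> k < kstar a -> two_unit_roots a c k m.
Proof.
  intros hc1 hur hm2 hks. pose proof x_v2_pos. pose proof (x_v2_lt_1 hm2).
  assert (hu1 : 0 < u 1) by (rewrite ucub_1; apply Rmult_lt_0_compat; nra).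
  destruct (ucub_sign_change 0 r) as [x1 [hx1 hux1]]; [lra | rewrite ucub_0; nra |].
  destruct (ucub_sign_change r 1) as [x2 [hx2 hux2]]; [lra | nra |].
  exists x1, x2; repeat split; try lra.
  intros x [hx hux]. destruct (Rle_or_lt x r); [left | right].
  - apply ucub_inj_below; lra.
  - apply ucub_inj_above; lra.
Qed.

Lemma unique_unit_root_of_eq_mm2 :
  c > 1 -> u r < 0 -> m = mm2 a c k -> unique_unit_root a c k m.
Proof.
  intros hc1 hur hm2. pose proof (x_v2_eq_1 hm2) as hr1. rewrite hr1 in hur.
  destruct (ucub_sign_change 0 1) as [x0 [hx0 hux0]]; [lra | rewrite ucub_0; nra |].
  exists x0; split; [split; [lra | exact hux0]|].
  intros x [hx hux]. apply ucub_inj_below; lra.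
Qed.

Lemma unique_unit_root_of_lt_mm2 :
  c > 1 -> m < mm2 a c k -> k > kstar a -> unique_unit_root a c k m.
Proof.
  intros hc1 hm2 hks. pose proof (x_v2_gt_1 hm2).
  assert (hu1 : u 1 < 0) by (rewrite ucub_1; nra).
  destruct (ucub_sign_change 0 1) as [x0 [hx0 hux0]]; [lra | rewrite ucub_0; nra |].
  exists x0; split; [split; [lra | exact hux0]|].
  intros x [hx hux]. apply ucub_inj_below; lra.
Qed.

Lemma unique_unit_root_of_c_le_1 :
  c <= 1 -> k < kstar a -> unique_unit_root a c k m.
Proof.
  intros hc1 hks. pose proof x_v2_pos.
  assert (hu1 : 0 < u 1) by (rewrite ucub_1; apply Rmult_lt_0_compat; nra).
  assert (hu0 : u 0 <= 0) by (rewrite ucub_0; lra).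
  assert (hr1 : r < 1).
  { destruct (Rlt_or_le r 1) as [|h]; [assumption|].
    pose proof (ucub_decreasing 0 1); lra. }
  pose proof (ucub_decreasing 0 r).
  destruct (ucub_sign_change r 1) as [x0 [hx0 hux0]]; [lra | nra |].
  exists x0; split; [split; [lra | exact hux0]|].
  intros x [hx hux]. destruct (Rle_or_lt x r).
  - exfalso. pose proof (ucub_decreasing 0 x); lra.
  - apply ucub_inj_above; lra.
Qed.

End Above_mm1.
End Model.

Theorem theorem5 (a b c k m : R) (ha : 0 < a) (hb : 0 < b) (hc : 0 < c)
  (hk : 0 < k) (hm : 0 < m) :
  (* (1) *)
  (m = mm1 a c k -> 0 < c < 1 -> 0 < k < kstar a -> unique_pos_eq a b c k m) /\
  (* (2) *)
  (m > mm1 a c k ->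
     (* (a) *)
     (c > 1 -> Delta_u a c k m > 0 ->
        (* (i) *)
        (ucub a c k m (x_v2 a c k m) = 0 -> m > mm2 a c k -> unique_pos_eq a b c k m) /\
        (* (ii) *)
        (ucub a c k m (x_v2 a c k m) < 0 ->
           (m > mm2 a c k -> k >= kstar a -> unique_pos_eq a b c k m) /\
           (m > mm2 a c k -> 0 < k < kstar a -> two_pos_eq a b c k m) /\
           (m = mm2 a c k -> unique_pos_eq a b c k m) /\
           (0 < m < mm2 a c k -> k > kstar a -> unique_pos_eq a b c k m))) /\
     (* (b) *)
     (0 < c <= 1 -> 0 < k < kstar a -> unique_pos_eq a b c k m)) /\
  (* (3) *)
  (0 < m < mm1 a c k -> 0 < c < 1 -> 0 < k < kstar a -> unique_pos_eq a b c k m).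
Proof.
  assert (unique_pos_eq_of := unique_pos_eq_of_unique_unit_root a b c k m hb hc hk).
  split; [|split].
  - intros hm1 hc1 hks; apply unique_pos_eq_of, unique_unit_root_of_le_mm1; lra.
  - intros hm1; split.
    (* Delta_u > 0 already follows from m > mm1, i.e. AA1 > 0 > AA3. *)
    + intros hc1 _; split; [intros hur hm2 | intros hur; repeat split].
      * apply unique_pos_eq_of, unique_unit_root_of_crit_root; lra.
      * intros hm2 hks; apply unique_pos_eq_of, unique_unit_root_of_crit_neg_ge_kstar; lra.
      * intros hm2 hks; apply two_pos_eq_of_two_unit_roots, two_unit_roots_of_crit_neg;
          lra.
      * intros hm2; apply unique_pos_eq_of, unique_unit_root_of_eq_mm2; lra.
      * intros hm2 hks; apply unique_pos_eq_of, unique_unit_root_of_lt_mm2; lra.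
    + intros hc1 hks; apply unique_pos_eq_of, unique_unit_root_of_c_le_1; lra.
  - intros hm1 hc1 hks; apply unique_pos_eq_of, unique_unit_root_of_le_mm1; lra.
Qed.
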